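(* Let $d\ge1$. (i) For $\lceil (d+1)/2\rceil\le j\le d$: $A(d+1,j,1)\le A(d+1,j,2)\le\dots\le A(d+1,j,d+1)$. (ii) For $0\le j\le\lfloor (d-1)/2\rfloor$: $A(d+1,j,1)\ge A(d+1,j,2)\ge\dots\ge A(d+1,j,d+1)$. (iii) If $d$ is even: $A(d+1,\tfrac d2,1)\le A(d+1,\tfrac d2,2)\le\dots\le A(d+1,\tfrac d2,\tfrac d2+1)\ge A(d+1,\tfrac d2,\tfrac d2+2)\ge\dots\ge A(d+1,\tfrac d2,d+1)$. (iv) For $0\le j\le d-1$: $A(d+1,j,1)=A(d+1,j+1,d+1)$.
   Context: $S_d$ is the symmetric group on $[d]=\{1,\dots,d\}$. For $\sigma\in S_d$, its descent set is $D(\sigma)=\{i\in[d-1]:\sigma(i)>\sigma(i+1)\}$ and $\mathrm{des}(\sigma)=\#D(\sigma)$. For $0\le i\le d-1$ and $1\le j\le d$, $A(d,i,j)=\#\{\sigma\in S_d:\mathrm{des}(\sigma)=i,\ \sigma(1)=j\}$. *)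

From mathcomp Require Import all_boot all_fingroup.
Set Implicit Arguments. Unset Strict Implicit. Unset Printing Implicit Defensive.

(* A permutation s : 'S_n of 'I_n = {0,..,n-1} is identified with the
   permutation sigma of [n] = {1,..,n} given by sigma(k+1) = s(k) + 1.
   word s = [:: sigma(1); ...; sigma(n)]. *)
Definition word (n : nat) (s : 'S_n) : seq nat := [seq (s x).+1 | x <- enum 'I_n].

(* sigma(k) for k in [n] (1-indexed), 0 outside. *)
Definition sigma (n : nat) (s : 'S_n) (k : nat) : nat := nth 0 (word s) k.-1.

Definition descent_set (n : nat) (s : 'S_n) : seq nat :=
  [seq i <- iota 1 n.-1 | sigma s i.+1 < sigma s i].

Definition des (n : nat) (s : 'S_n) : nat := size (descent_set s).

Definition A (d i j : nat) : nat :=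
  #|[set s : 'S_d | (des s == i) && (sigma s 1 == j)]|.

From mathcomp Require Import all_boot all_fingroup zify.
Set Implicit Arguments. Unset Strict Implicit. Unset Printing Implicit Defensive.

(* Identify a permutation with its word sigma(1) ... sigma(n); then A(n,i,k) counts
   the permutations of [n] (as words) with i descents and first letter k.  Two facts
   carry the whole argument:
   - the first-letter recurrence [A_rec]: deleting the first letter k and
     standardising the rest (with [bump k]) gives
       A(n+1,i,k) = sum_(1 <= m < k) A(n,i-1,m) + sum_(k <= m <= n) A(n,i,m);
   - the complement symmetry [A_complement]: sigma |-> n+1-sigma gives
       A(n,i,k) = A(n,n-1-i,n+1-k).
   The recurrence yields A(d+1,j,k+1) - A(d+1,j,k) = A(d,j-1,k) - A(d,j,k)
   ([A_shift_first]), so parts (i)-(iii) reduce to comparing consecutive rows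
   j-1, j of the array A(d,.,k): below the middle the rows increase, above it they
   decrease, and for d = 2c the two middle rows cross at k = c.  Part (iv) is the
   recurrence at k = 1 and at k = d+1. *)

Local Notation perms := permutations.

Lemma count_eq0 (T : eqType) (a : pred T) (s : seq T) :
  (forall x, x \in s -> ~~ a x) -> count a s = 0.
Proof. by move=> Na; apply/eqP; rewrite eqn0Ngt -has_count; apply/hasPn. Qed.

Fixpoint descents (w : seq nat) : nat :=
  if w is x :: ((y :: _) as t) then (y < x) + descents t else 0.
Arguments descents : simpl nomatch.

Lemma descents_cons x w : descents (x :: w) = (head x w < x) + descents w.
Proof. by case: w => [|y t] //=; rewrite ltnn. Qed.

Lemma descentsE w :
  descents w = count (fun i => nth 0 w i < nth 0 w i.-1) (iota 1 (size w).-1).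
Proof.
elim: w => [|x [|y t] IH] //; rewrite descents_cons IH /=; congr (_ + _).
rewrite -[2]/(1 + 1) iotaDl count_map.
by apply: eq_in_count => -[|i] //; rewrite mem_iota.
Qed.

Lemma descents_le w : descents w <= (size w).-1.
Proof. by rewrite descentsE (leq_trans (count_size _ _)) // size_iota. Qed.

Lemma descents_mono f w : {mono f : x y / x < y} -> descents (map f w) = descents w.
Proof.
move=> fM; elim: w => [|x w IH] //; rewrite map_cons !descents_cons IH.
by case: w {IH} => [|y t] /=; rewrite ?ltnn ?fM.
Qed.

Lemma descents_complement c w : uniq w -> all (fun x => x <= c) w ->
  descents (map (fun x => c - x) w) = (size w).-1 - descents w.
Proof.
elim: w => [|x w IH] // /andP[xNw Uw] /andP[xc wc].
rewrite map_cons !descents_cons IH //; have := descents_le w.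
case: w {IH} xNw Uw wc => [|y t] /=; first by rewrite ltnn.
by rewrite inE negb_or => /andP[xy _] _ /andP[yc _]; lia.
Qed.

Section Words.
Variable n : nat.

Lemma size_word (s : 'S_n) : size (word s) = n.
Proof. by rewrite size_map size_enum_ord. Qed.

Lemma nth_word (s : 'S_n) (x : 'I_n) : nth 0 (word s) x = (s x).+1.
Proof. by rewrite (nth_map x) ?size_enum_ord // nth_ord_enum. Qed.

Lemma word_inj : injective (@word n).
Proof.
move=> s1 s2 E; apply/permP => x; apply/val_inj/succn_inj.
by rewrite -!nth_word E.
Qed.

Lemma des_word (s : 'S_n) : des s = descents (word s).
Proof. by rewrite /des /descent_set size_filter descentsE size_word. Qed.

Lemma sigma1_word (s : 'S_n) : sigma s 1 = head 0 (word s).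
Proof. by rewrite /sigma nth0. Qed.

Lemma word_perm_eq (s : 'S_n) : perm_eq (word s) (iota 1 n).
Proof.
apply: uniq_perm.
- by rewrite map_inj_uniq ?enum_uniq // => x y /succn_inj/val_inj/perm_inj.
- exact: iota_uniq.
move=> y; rewrite mem_iota add1n; apply/mapP/idP => [[x _ ->]|].
  by rewrite /= ltnS ltn_ord.
case: y => // y /=; rewrite ltnS => y_lt.
by exists ((s^-1)%g (Ordinal y_lt)); rewrite ?mem_enum ?permKV.
Qed.

(* [word] is a bijection from 'S_n onto the permutations of the list [1; ...; n];
   surjectivity follows by counting, both sides having n! elements. *)
Lemma words_perm_eq : perm_eq (map (@word n) (enum 'S_n)) (perms (iota 1 n)).
Proof.
have Uw : uniq (map (@word n) (enum 'S_n)).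
  by rewrite map_inj_uniq ?enum_uniq //; apply: word_inj.
have sub : {subset map (@word n) (enum 'S_n) <= perms (iota 1 n)}.
  by move=> w /mapP[s _ ->]; rewrite mem_permutations word_perm_eq.
have sz : size (perms (iota 1 n)) <= size (map (@word n) (enum 'S_n)).
  by rewrite size_permutations ?iota_uniq // size_iota size_map -cardE card_Sn.
apply: uniq_perm => //; [exact: permutations_uniq | exact: (uniq_min_size Uw sub sz).2].
Qed.

End Words.

Lemma A_count n i k :
  A n i k = count (fun w => (descents w == i) && (head 0 w == k)) (perms (iota 1 n)).
Proof.
rewrite -(seq.permP (words_perm_eq n)) count_map /A cardsE cardE size_filter -enumT.
by apply: eq_count => s; rewrite [in RHS]/= -(des_word s) -(sigma1_word s).
Qed.

Lemma count_perms_cons (P : pred (seq nat)) s : uniq s -> 0 < size s ->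
  count P (perms s) = \sum_(x <- s) count (fun t => P (x :: t)) (perms (rem x s)).
Proof.
move=> Us s_gt0; rewrite (seq.permP (permutationsE s_gt0)) undup_id //.
by rewrite count_flatten sumnE !big_map; apply: eq_bigr => x _; rewrite count_map.
Qed.

Lemma count_perms_head (P : pred (seq nat)) s k : uniq s -> k \in s ->
  count (fun w => P w && (head 0 w == k)) (perms s) =
  count (fun t => P (k :: t)) (perms (rem k s)).
Proof.
move=> Us ks; rewrite count_perms_cons //; last by case: s ks {Us}.
rewrite (bigD1_seq k) //= big1_seq ?addn0 => [|x /andP[xk _]].
  by apply: eq_count => t /=; rewrite eqxx andbT.
by apply: count_eq0 => t _ /=; rewrite (negbTE xk) andbF.
Qed.

Lemma perms_map (T U : eqType) (f : T -> U) (g : U -> T) (s : seq T) :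
  {in s, cancel f g} -> perm_eq (perms (map f s)) (map (map f) (perms s)).
Proof.
move=> fK; have f_inj := can_in_inj fK.
apply: uniq_perm; first exact: permutations_uniq.
  rewrite map_inj_in_uniq ?permutations_uniq //.
  have in_s u : u \in perms s -> u \in [pred u | all (mem s) u].
    by rewrite mem_permutations => /perm_mem us; apply/allP => x; rewrite us.
  by move=> u v /in_s us /in_s vs; apply: (inj_in_map f_inj).
have gfs : map g (map f s) = s by rewrite -map_comp -[RHS]map_id; apply/eq_in_map.
move=> t; rewrite mem_permutations; apply/idP/mapP => [pt | [u pu ->]]; last first.
  by rewrite mem_permutations in pu; apply: perm_map.
exists (map g t); first by rewrite mem_permutations -gfs perm_map.
rewrite -map_comp -{1}[t]map_id; apply/eq_in_map => y.
by rewrite (perm_mem pt) => /mapP[x xs ->] /=; rewrite fK.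
Qed.

Lemma rem_iota_bump k n : 0 < k <= n.+1 ->
  perm_eq (rem k (iota 1 n.+1)) (map (bump k) (iota 1 n)).
Proof.
move=> k_range; apply: uniq_perm.
- by rewrite rem_uniq ?iota_uniq.
- by rewrite map_inj_uniq ?iota_uniq //; apply: can_inj (bumpK k).
move=> y; rewrite mem_rem_uniq ?iota_uniq // inE mem_iota.
apply/andP/mapP => [[yk y_range] | [x x_in ->]].
  exists (unbump k y); last by rewrite unbumpKcond (negbTE yk).
  by rewrite mem_iota /unbump; lia.
by move: x_in; rewrite mem_iota /bump; lia.
Qed.

Lemma descents_bump k u : u != [::] ->
  descents (k :: map (bump k) u) = (head 0 u < k) + descents u.
Proof.
have bumpM : {mono bump k : x y / x < y} by move=> x y; rewrite /bump; apply/idP/idP; lia.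
case: u => // x t _; rewrite descents_cons descents_mono //=; congr (_ + _).
by rewrite /bump; case: leqP; lia.
Qed.

Lemma head_perm_iota n w : 0 < n -> perm_eq w (iota 1 n) -> 0 < head 0 w <= n.
Proof.
move=> n_gt0 pw; case: w pw => [|x t] pw.
  by move: (perm_size pw); rewrite size_iota /=; lia.
by have := perm_mem pw x; rewrite mem_head mem_iota /= => /esym; lia.
Qed.

Lemma A_first_out_of_range n i k : 0 < n -> (k == 0) || (n < k) -> A n i k = 0.
Proof.
move=> n_gt0 k_out; rewrite A_count; apply: count_eq0 => w.
by rewrite mem_permutations => /(head_perm_iota n_gt0) w_head /=; lia.
Qed.

Lemma A_too_many_descents n i k : 0 < n -> n <= i -> A n i k = 0.
Proof.
move=> n_gt0 i_big; rewrite A_count; apply: count_eq0 => w.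
rewrite mem_permutations => /perm_size; rewrite size_iota => sw /=.
by have := descents_le w; rewrite sw; lia.
Qed.

Definition Aprev n i m := if i is i'.+1 then A n i' m else 0.

Lemma AprevE n i m : 0 < i -> Aprev n i m = A n i.-1 m.
Proof. by case: i. Qed.

Lemma A_rec n i k : 0 < n -> 0 < k <= n.+1 ->
  A n.+1 i k = \sum_(1 <= m < k) Aprev n i m + \sum_(k <= m < n.+1) A n i m.
Proof.
move=> n_gt0 k_range.
have k_in : k \in iota 1 n.+1 by rewrite mem_iota; lia.
rewrite A_count (count_perms_head (fun w => descents w == i)) ?iota_uniq //.
rewrite (seq.permP (perm_permutations (rem_iota_bump k_range))).
rewrite (seq.permP (perms_map (in1W (bumpK k)))) count_map.
transitivity (count (fun u => descents u + (head 0 u < k) == i) (perms (iota 1 n))).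
  apply: eq_in_count => u; rewrite mem_permutations => pu /=.
  have u_nil : u != [::] by case: u pu => // /perm_size; rewrite size_iota /=; lia.
  by rewrite descents_bump // addnC.
have by_head m : m \in iota 1 n ->
    count (fun t => descents (m :: t) + (head 0 (m :: t) < k) == i)
      (perms (rem m (iota 1 n))) = if m < k then Aprev n i m else A n i m.
  move=> m_in; rewrite /Aprev; case: (ltnP m k) => mk; last first.
    by rewrite A_count count_perms_head ?iota_uniq //; apply: eq_count => t; rewrite addn0.
  case: i => [|i']; first by apply: count_eq0 => t _; rewrite addn1.
  by rewrite A_count count_perms_head ?iota_uniq //; apply: eq_count => t; rewrite addn1.
rewrite count_perms_cons ?iota_uniq ?size_iota // (eq_big_seq _ by_head).
have -> : iota 1 n = index_iota 1 n.+1 by rewrite /index_iota subn1.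
rewrite (@big_cat_nat _ _ _ k) /=; try lia.
by congr (_ + _); apply: eq_big_nat => m m_range; [rewrite ifT | rewrite ifF] => //; lia.
Qed.

Lemma A_shift_first n i k : 0 < n -> 0 < k <= n ->
  A n.+1 i k + Aprev n i k = A n.+1 i k.+1 + A n i k.
Proof.
move=> n_gt0 k_range; rewrite !A_rec //; try lia.
rewrite [\sum_(1 <= m < k.+1) _]big_nat_recr /=; last lia.
by rewrite [\sum_(k <= m < n.+1) _]big_ltn; lia.
Qed.

Lemma A_first n i : 0 < n -> A n.+1 i 1 = \sum_(1 <= m < n.+1) A n i m.
Proof. by move=> n_gt0; rewrite A_rec // big_geq. Qed.

Lemma A_last n i : 0 < n -> A n.+1 i.+1 n.+1 = \sum_(1 <= m < n.+1) A n i m.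
Proof. by move=> n_gt0; rewrite A_rec ?leqnn // [X in _ + X]big_geq ?addn0. Qed.

Lemma A_complement n i k : 0 < n -> i <= n.-1 -> A n i k = A n (n.-1 - i) (n.+1 - k).
Proof.
move=> n_gt0 i_le; pose c x := n.+1 - x.
have cK : {in iota 1 n, cancel c c} by move=> x; rewrite mem_iota /c; lia.
have c_iota : perm_eq (map c (iota 1 n)) (iota 1 n).
  apply: uniq_perm.
  - by rewrite map_inj_in_uniq ?iota_uniq //; apply: can_in_inj cK.
  - exact: iota_uniq.
  move=> y; apply/mapP/idP => [[x + ->]|]; first by rewrite !mem_iota /c; lia.
  by rewrite mem_iota => y_range; exists (c y); rewrite ?cK ?mem_iota /c //; lia.
rewrite !A_count -(seq.permP (perm_permutations c_iota)).
rewrite (seq.permP (perms_map cK)) count_map.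
apply: eq_in_count => w; rewrite mem_permutations => pw /=.
have sw : size w = n by rewrite (perm_size pw) size_iota.
have w_le : all (fun x => x <= n.+1) w.
  by apply/allP => x; rewrite (perm_mem pw) mem_iota; lia.
have := descents_le w; have := head_perm_iota n_gt0 pw.
rewrite descents_complement ?(perm_uniq pw) ?iota_uniq // sw.
case: w {pw sw w_le} => [|x t] /= x_range des_le; first lia.
by rewrite /c; congr (_ && _); apply/eqP/eqP; lia.
Qed.

Lemma A_succ_complement n i k : 0 < n -> i <= n.-1 ->
  A n i.+1 k = Aprev n (n.-1 - i) (n.+1 - k).
Proof.
move=> n_gt0 i_le; case: (ltnP i n.-1) => i_lt.
  by rewrite A_complement // (_ : n.-1 - i = (n.-1 - i.+1).+1) //; lia.
have -> : n.-1 - i = 0 by lia.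
by rewrite A_too_many_descents //; lia.
Qed.

Lemma row_total_complement n i : 0 < n -> i <= n.-1 ->
  \sum_(1 <= m < n.+1) A n i m = \sum_(1 <= m < n.+1) A n (n.-1 - i) m.
Proof.
move=> n_gt0 i_le; rewrite [RHS]big_nat_rev; apply: eq_big_nat => m m_range.
by rewrite A_complement // (_ : 1 + n.+1 - m.+1 = n.+1 - m) //; lia.
Qed.

Lemma leq_sum_range (F G : nat -> nat) a b :
  (forall m, a <= m < b -> F m <= G m) ->
  \sum_(a <= m < b) F m <= \sum_(a <= m < b) G m.
Proof.
move=> FG; rewrite big_nat_cond [X in _ <= X]big_nat_cond.
by apply: leq_sum => m /andP[m_range _]; apply: FG.
Qed.

Lemma sum_reflect (F : nat -> nat) a b c : a <= b -> b <= c.+1 ->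
  \sum_(a <= m < b) F (c - m) = \sum_(c.+1 - b <= m < c.+1 - a) F m.
Proof.
elim: b => [|b IH] ab bc; first by rewrite !big_geq //; lia.
case: (eqVneq a b.+1) => [->|a_ne]; first by rewrite !big_geq.
rewrite big_nat_recr /= ?IH; try lia.
have -> : c.+1 - b = (c - b).+1 by lia.
rewrite subSS [in RHS]big_ltn; last lia.
by rewrite addnC.
Qed.

Lemma tail_dominance (f g : nat -> nat) a b c :
  \sum_(a <= m < b) f m = \sum_(a <= m < b) g m ->
  (forall m, m < c -> f m <= g m) -> (forall m, c <= m -> g m <= f m) ->
  forall k, a <= k -> \sum_(k <= m < b) g m <= \sum_(k <= m < b) f m.
Proof.
move=> total fg gf k ak; case: (leqP c k) => ck.
  by apply: leq_sum_range => m m_range; apply: gf; lia.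
case: (leqP k b) => kb; last by rewrite !big_geq //; lia.
have head_le : \sum_(a <= m < k) f m <= \sum_(a <= m < k) g m.
  by apply: leq_sum_range => m m_range; apply: fg; lia.
by move: total; rewrite !(big_cat_nat ak kb) /=; lia.
Qed.

(* If g <= f pointwise, the partial sums of f - g are nondecreasing. *)
Lemma prefix_gap (f g : nat -> nat) a b1 b2 : a <= b1 <= b2 -> (forall m, g m <= f m) ->
  \sum_(a <= m < b1) f m + \sum_(a <= m < b2) g m <=
  \sum_(a <= m < b1) g m + \sum_(a <= m < b2) f m.
Proof.
case/andP=> ab1 b12 gf; rewrite !(big_cat_nat ab1 b12) /=.
have : \sum_(b1 <= m < b2) g m <= \sum_(b1 <= m < b2) f m by apply: leq_sum_range.
lia.
Qed.

Definition lower_rows_increase n := forall j k, j.*2 < n -> Aprev n j k <= A n j k.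

Definition middle_rows_cross n :=
  forall c k, 0 < c -> n = c.*2 -> k <= c -> A n c k <= Aprev n c k.

Lemma upper_rows_decrease n j k : 0 < n -> lower_rows_increase n -> n < j.*2 ->
  A n j k <= Aprev n j k.
Proof.
move=> n_gt0 up j_big; case: (leqP n j) => j_n; first by rewrite A_too_many_descents.
case: j j_big j_n => [|j] j_big j_n /=; first lia.
rewrite A_succ_complement; try lia.
rewrite [A n j k]A_complement; try lia.
by apply: up; lia.
Qed.

Lemma middle_rows_cross_high n c k : 0 < n -> middle_rows_cross n -> 0 < c ->
  n = c.*2 -> c < k -> Aprev n c k <= A n c k.
Proof.
move=> n_gt0 mid; case: c => [|c] // _ n_eq ck /=.
rewrite A_succ_complement; try lia.
rewrite [A n c k]A_complement; try lia.
rewrite (_ : n.-1 - c = c.+1); last lia.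
by apply: mid; lia.
Qed.

(* The crossing of the middle rows, together with their equal totals, makes row c
   dominate row c-1 on every final segment of first letters. *)
Lemma middle_rows_tail n c k : 0 < n -> middle_rows_cross n -> 0 < c -> n = c.*2 ->
  0 < k -> \sum_(k <= m < n.+1) Aprev n c m <= \sum_(k <= m < n.+1) A n c m.
Proof.
move=> n_gt0 mid c_gt0 n_eq k_gt0.
apply: (tail_dominance (a := 1) (c := c.+1)) => //.
- rewrite row_total_complement; try lia.
  have -> : n.-1 - c = c.-1 by lia.
  by apply: eq_bigr => m _; rewrite AprevE.
- by move=> m m_le; apply: mid; lia.
- by move=> m m_gt; apply: middle_rows_cross_high => //; lia.
Qed.

(* Induction step for the lower rows: compare the two recurrences term by term,
   using the crossing of the middle rows when row j+1 is the middle one. *)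
Lemma lower_rows_increase_step n : 0 < n ->
  lower_rows_increase n -> middle_rows_cross n -> lower_rows_increase n.+1.
Proof.
move=> n_gt0 up mid [|j] k j_lt //=.
case: (posnP k) => [->|k_gt0]; first by rewrite A_first_out_of_range.
case: (leqP k n.+1) => k_le; last by rewrite A_first_out_of_range //; lia.
rewrite !A_rec //; try lia.
apply: leq_add; first by apply: leq_sum_range => m _; apply: up; lia.
case: (ltnP j.+1.*2 n) => [j_lt' | j_ge]; last by apply: middle_rows_tail => //; lia.
by apply: leq_sum_range => m _; apply: (up j.+1).
Qed.

(* Induction step for the middle rows of A(2c, ., k): after reflecting the tails
   of the recurrence by the symmetry, this is [prefix_gap] for rows c-2 <= c-1 of A(2c-1). *)
Lemma middle_rows_cross_step n : 0 < n -> lower_rows_increase n -> middle_rows_cross n.+1.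
Proof.
move=> n_gt0 up [|r] k // _ n_eq k_le /=.
case: (posnP k) => [->|k_gt0]; first by rewrite A_first_out_of_range.
rewrite !A_rec; try lia.
have reflect_tail (F G : nat -> nat) : (forall m, F m = G (n.+1 - m)) ->
    \sum_(k <= m < n.+1) F m = \sum_(1 <= m < n.+2 - k) G m.
  by move=> FG; rewrite (eq_big_nat _ _ (fun m _ => FG m)) sum_reflect ?subSnn //; lia.
have n_r : n.-1 - r = r by lia.
rewrite (reflect_tail _ (Aprev n r)); last by move=> m; rewrite A_succ_complement ?n_r //; lia.
rewrite (reflect_tail _ (A n r)); last by move=> m; rewrite [LHS]A_complement ?n_r //; lia.
apply: (prefix_gap (f := A n r)); first lia.
by move=> m; apply: up; lia.
Qed.

Lemma rows_unimodal n : 0 < n -> lower_rows_increase n /\ middle_rows_cross n.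
Proof.
elim: n => // n IH _; case: (posnP n) => [->|n_gt0].
  by split=> [[|j] k|c k c_gt0] //=; lia.
have [up mid] := IH n_gt0.
by split; [apply: lower_rows_increase_step | apply: middle_rows_cross_step].
Qed.

Theorem corollary4p9 (d : nat) (hd : 1 <= d) :
  (* (i) *)
  (forall j, (d + 2) %/ 2 <= j -> j <= d ->
     forall k, 1 <= k -> k <= d -> A d.+1 j k <= A d.+1 j k.+1) /\
  (* (ii) *)
  (forall j, j <= (d - 1) %/ 2 ->
     forall k, 1 <= k -> k <= d -> A d.+1 j k >= A d.+1 j k.+1) /\
  (* (iii) *)
  (~~ odd d ->
     (forall k, 1 <= k -> k <= d %/ 2 -> A d.+1 (d %/ 2) k <= A d.+1 (d %/ 2) k.+1) /\
     (forall k, d %/ 2 + 1 <= k -> k <= d -> A d.+1 (d %/ 2) k >= A d.+1 (d %/ 2) k.+1)) /\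
  (* (iv) *)
  (forall j, j <= d - 1 -> A d.+1 j 1 = A d.+1 j.+1 d.+1).
Proof.
have [up mid] := rows_unimodal hd.
have shift j k : 1 <= k <= d -> A d.+1 j k + Aprev d j k = A d.+1 j k.+1 + A d j k.
  exact: A_shift_first.
split; [|split; [|split]].
- move=> j j_lo j_hi k k_lo k_hi.
  by have := upper_rows_decrease k hd up (_ : d < j.*2); have := shift j k; lia.
- move=> j j_hi k k_lo k_hi.
  by have := up j k (_ : j.*2 < d); have := shift j k; lia.
- move=> d_even; have d_eq : d = (d %/ 2).*2 by rewrite divn2 even_halfK.
  split=> k k_lo k_hi; have := shift (d %/ 2) k.
  + by have := mid (d %/ 2) k (_ : 0 < d %/ 2) d_eq k_hi; lia.
  + by have := middle_rows_cross_high hd mid (_ : 0 < d %/ 2) d_eq (_ : d %/ 2 < k); lia.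
- by move=> j _; rewrite A_first // A_last.
Qed.
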